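(* Let $v$ be a pure bargaining game on $N$, i.e., $v(S)=0$ for all $S\ne N$, and let $n=|N|$. Let $i\in N$ and let $v_i$ be the component game (the unique $v_i\in\ell^2(V)$ with $v_i(\emptyset)=0$ and $\mathrm{d}v_i=P\mathrm{d}_iv$). Then for every $S\subset N\setminus\{i\}$, $$v_i(S\cup\{i\}) = \frac{1}{n2^n}\left(1+\frac{\binom{n}{0}+\cdots+\binom{n}{|S|}}{\binom{n-1}{|S|}}\right)v(N),\qquad v_i(S) = \frac{1}{n2^n}\left(1-\frac{\binom{n}{0}+\cdots+\binom{n}{|S|}}{\binom{n-1}{|S|}}\right)v(N).$$
   Context: Let $N$ be a finite set of players. A game is a function $v\colon 2^N\to\mathbb{R}$ with $v(\emptyset)=0$. The hypercube graph $G=(V,E)$ has $V=2^N$ and oriented edges $E=\{(S,S\cup\{i\}) : i\in N,\ S\subset N\setminus\{i\}\}$. $\ell^2(V)$ and $\ell^2(E)$ are the spaces of real functions on $V$ and $E$ with the standard inner products $\sum_{S}u(S)w(S)$ and $\sum_{e}f(e)g(e)$. $\mathrm{d}\colon \ell^2(V)\to\ell^2(E)$ is $\mathrm{d}u(S,S\cup\{i\}) = u(S\cup\{i\})-u(S)$. For $i\in N$, $\mathrm{d}_i\colon\ell^2(V)\to\ell^2(E)$ is defined by $\mathrm{d}_i u(S,S\cup\{j\}) = u(S\cup\{i\})-u(S)$ if $j=i$ and $0$ if $j\ne i$. $P$ is the orthogonal projection of $\ell^2(E)$ onto the range $\mathcal{R}(\mathrm{d})$. *)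

(* Players: a finite type T (N = [set: T]).
   Vertices V = {set T}; oriented edges (S, S ∪ {j}) with j ∉ S are encoded
   by pairs (S, j) with j \notin S. *)
From HB Require Import structures.
From mathcomp Require Import all_boot all_order all_algebra.
Set Implicit Arguments. Unset Strict Implicit. Unset Printing Implicit Defensive.
Import Order.TTheory GRing.Theory Num.Theory.
Local Open Scope ring_scope.

Definition vfun (T : finType) (R : realFieldType) := {set T} -> R.
(* l^2(E): value at edge (S, S ∪ {j}) is f S j (only meaningful for j \notin S) *)
Definition efun (T : finType) (R : realFieldType) := {set T} -> T -> R.

Definition einner (T : finType) (R : realFieldType) (f g : efun T R) : R :=
  \sum_(S : {set T}) \sum_(j | j \notin S) f S j * g S j.

Definition dV (T : finType) (R : realFieldType) (u : vfun T R) : efun T R :=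
  fun S j => u (j |: S) - u S.

Definition dI (T : finType) (R : realFieldType) (i : T) (u : vfun T R) : efun T R :=
  fun S j => if j == i then u (i |: S) - u S else 0.

(* g = P f, P the orthogonal projection of l^2(E) onto R(d):
   g lies in R(d) and f - g is orthogonal to R(d). *)
Definition is_proj_range_d (T : finType) (R : realFieldType) (f g : efun T R) : Prop :=
  (exists u : vfun T R, forall (S : {set T}) (j : T), j \notin S -> g S j = dV u S j) /\
  (forall w : vfun T R, einner (fun S j => f S j - g S j) (dV w) = 0).

Definition is_component_game (T : finType) (R : realFieldType) (v : vfun T R)
  (i : T) (vi : vfun T R) : Prop :=
  vi set0 = 0 /\ is_proj_range_d (dI i v) (dV vi).

Definition pure_bargaining (T : finType) (R : realFieldType) (v : vfun T R) : Prop :=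
  forall S : {set T}, S != [set: T] -> v S = 0.

From HB Require Import structures.
From mathcomp Require Import all_boot all_order all_algebra.
From mathcomp Require Import ring zify.

Set Implicit Arguments.
Unset Strict Implicit.
Unset Printing Implicit Defensive.

Import Order.TTheory GRing.Theory Num.Theory.
Local Open Scope ring_scope.

(* The component game is the potential of the projection of d_i v onto the
   gradients, so it is characterised by v_i(∅) = 0 and the normal equations
   d*(d_i v - d v_i) = 0; uniqueness holds because a function with zero gradient
   is constant on the connected hypercube.  For a pure bargaining game all
   players other than i play symmetric roles, so we may look for v_i(S)
   depending only on whether i ∈ S and on k = |S \ i|.  The normal equation at
   a coalition then becomes a three-term recurrence for the coefficients
   c_k = (C(n,0) + ... + C(n,k)) / C(n-1,k), which reduces to the identity
   (k+1) C(n,k+1) = (n-k) C(n,k). *)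

Definition binom_psum (n k : nat) : nat := (\sum_(l < k.+1) 'C(n, l))%N.

Lemma binom_psumS n k : binom_psum n k.+1 = (binom_psum n k + 'C(n, k.+1))%N.
Proof. by rewrite /binom_psum big_ord_recr. Qed.

Lemma binom_psum0 n : binom_psum n 0 = 1%N.
Proof. by rewrite /binom_psum big_ord1 bin0. Qed.

Lemma binom_psum_full n : binom_psum n n = (2 ^ n)%N.
Proof.
rewrite -[2%N]/(1 + 1)%N expnDn; apply: eq_bigr => l _.
by rewrite !exp1n !muln1.
Qed.

Definition bargain_coef (R : numFieldType) (n k : nat) : R :=
  (\sum_(l < k.+1) ('C(n, l))%:R) / ('C(n.-1, k))%:R.

Section BargainCoef.
Variable R : numFieldType.
Local Notation c := (bargain_coef R).

Lemma bargain_coef_mulr_bin n k : (k <= n.-1)%N ->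
  c n k * ('C(n.-1, k))%:R = (binom_psum n k)%:R.
Proof. by move=> hk; rewrite divfK ?natr_sum // pnatr_eq0 -lt0n bin_gt0. Qed.

Lemma bargain_coef0 n : c n 0 = 1.
Proof. by rewrite /bargain_coef big_ord1 !bin0 divr1. Qed.

(* The normal equation of the component game at a coalition with k members
   other than i and m players outside it.  For m = 0, [c n k.+1] is the junk
   value of a division by 'C(k, k.+1) = 0; it is cancelled by the factor m and
   the indicator term takes its place. *)
Lemma bargain_coef_recurrence k m : let n := (k + m).+1 in
  m%:R * (c n k.+1 - c n k) - k%:R * (c n k - c n k.-1) - 2 * c n k
  + (m == 0)%:R * (n * 2 ^ n)%:R = 0.
Proof.
move=> n; set B : R := ('C(n.-1, k))%:R.
have B_neq0 : B != 0 by rewrite pnatr_eq0 -lt0n bin_gt0 leq_addr.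
have above : m%:R * c n k.+1 * B + (m == 0)%:R * (n * 2 ^ n)%:R * B
             = (k.+1 * binom_psum n k.+1)%:R.
  case: m => [|m] in n B B_neq0 *.
    by rewrite /B /n addn0 /= binn binom_psum_full natrM; ring.
  have e : (m.+1 * 'C(k + m.+1, k) = k.+1 * 'C(k + m.+1, k.+1))%N.
    by rewrite mul_bin_left; congr (_ * _)%N; lia.
  rewrite /= !mul0r addr0 mulrAC /B /n /= -natrM e natrM -mulrA [_ * c _ _]mulrC.
  by rewrite bargain_coef_mulr_bin -?natrM //; lia.
have below : k%:R * c n k.-1 * B = m.+1%:R * ((binom_psum n k)%:R - ('C(n, k))%:R).
  case: k => [|k] in n B B_neq0 above *.
    by rewrite binom_psum0 bin0 subrr !mul0r mulr0.
  have e : (k.+1 * 'C(k.+1 + m, k.+1) = m.+1 * 'C(k.+1 + m, k))%N.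
    by rewrite mul_bin_left; congr (_ * _)%N; lia.
  rewrite binom_psumS natrD addrK mulrAC /B /n /= -(natrM _ k.+1) e natrM -mulrA.
  by rewrite [_ * c _ _]mulrC bargain_coef_mulr_bin //; lia.
have at_k : c n k * B = (binom_psum n k)%:R by rewrite bargain_coef_mulr_bin //= leq_addr.
have pascal : (k.+1 * 'C(n, k.+1) = m.+1 * 'C(n, k))%N.
  by rewrite mul_bin_left; congr (_ * _)%N; lia.
apply: (mulIf B_neq0); rewrite mul0r.
transitivity ((m%:R * c n k.+1 * B + (m == 0)%:R * (n * 2 ^ n)%:R * B)
  + k%:R * c n k.-1 * B - (m + k + 2)%:R * (c n k * B)); first by rewrite !natrD; ring.
rewrite above below at_k binom_psumS.
transitivity ((k.+1 * 'C(n, k.+1))%:R - (m.+1 * 'C(n, k))%:R : R).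
  by rewrite !natrM !natrD; ring.
by rewrite pascal subrr.
Qed.

End BargainCoef.

Section Hypercube.
Variables (T : finType) (R : realFieldType).
Implicit Types (h : efun T R) (u v w : vfun T R) (A S : {set T}).

Definition dV_adj h : vfun T R :=
  fun A => \sum_(j in A) h (A :\ j) j - \sum_(j | j \notin A) h A j.

Lemma dV_adjB h1 h2 A :
  dV_adj (fun S j => h1 S j - h2 S j) A = dV_adj h1 A - dV_adj h2 A.
Proof. by rewrite /dV_adj /= !sumrB; ring. Qed.

Lemma einnerBl h1 h2 h :
  einner (fun S j => h1 S j - h2 S j) h = einner h1 h - einner h2 h.
Proof.
rewrite /einner -sumrB; apply: eq_bigr => S _; rewrite -sumrB.
by apply: eq_bigr => j _; rewrite mulrBl.
Qed.

Lemma big_setU1_notin (G : {set T} -> R) j :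
  \sum_(S : {set T} | j \notin S) G (j |: S) = \sum_(A : {set T} | j \in A) G A.
Proof.
rewrite [RHS](reindex_onto (fun S => j |: S) (fun A => A :\ j)) => [|A jA].
  apply: eq_bigl => S; rewrite setU11 /=.
  by apply/idP/eqP => [jS | <-]; [rewrite setU1K | rewrite setD11].
by rewrite setD1K.
Qed.

Lemma einner_dV h w : einner h (dV w) = \sum_A w A * dV_adj h A.
Proof.
rewrite /einner /dV /dV_adj.
under eq_bigr do rewrite (eq_bigr _ (fun j _ => mulrBr _ _ _)) sumrB.
under [RHS]eq_bigr do rewrite mulrBr !mulr_sumr.
rewrite !sumrB; congr (_ - _); last first.
  by apply: eq_bigr => S _; apply: eq_bigr => j _; rewrite mulrC.
rewrite (exchange_big_dep xpredT) //= [RHS](exchange_big_dep xpredT) //=.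
apply: eq_bigr => j _; rewrite -(big_setU1_notin (fun A => w A * h (A :\ j) j)).
by apply: eq_bigr => S jS; rewrite setU1K // mulrC.
Qed.

Lemma einner_self_eq0 h : einner h h = 0 -> forall S j, j \notin S -> h S j = 0.
Proof.
have sq_ge0 (x : R) : 0 <= x * x by rewrite -expr2 sqr_ge0.
have inner_ge0 S : true -> 0 <= \sum_(j | j \notin S) h S j * h S j.
  by move=> _; apply: sumr_ge0 => j _; exact: sq_ge0.
move=> hh0 S j jS; have hS0 := psumr_eq0P inner_ge0 hh0 (i := S) isT.
have := psumr_eq0P (fun j _ => sq_ge0 (h S j)) hS0 jS.
by move/eqP; rewrite mulf_eq0 orbb => /eqP.
Qed.

Lemma dV_eq0_const u : (forall S j, j \notin S -> dV u S j = 0) -> forall S, u S = u set0.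
Proof.
move=> du0 S; have [n leSn] := ubnP #|S|; elim: n S leSn => // n IH S leSn.
have [->|/set0Pn [j jS]] := eqVneq S set0; first by [].
rewrite -(setD1K jS) -[RHS](IH (S :\ j)); last by move: leSn; rewrite (cardsD1 j S) jS.
by apply/eqP; rewrite -subr_eq0 -[_ - _]/(dV u (S :\ j) j) du0 ?setD11.
Qed.

Lemma dV_proj_unique h u1 u2 :
  (forall w, einner (fun S j => h S j - dV u1 S j) (dV w) = 0) ->
  (forall w, einner (fun S j => h S j - dV u2 S j) (dV w) = 0) ->
  u1 set0 = u2 set0 -> u1 =1 u2.
Proof.
move=> orth1 orth2 e0 S; pose g S := u1 S - u2 S.
have dg_orth w : einner (dV g) (dV w) = 0.
  transitivity (einner (fun S j => (h S j - dV u2 S j) - (h S j - dV u1 S j)) (dV w)).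
    by apply: eq_bigr => A _; apply: eq_bigr => j _; rewrite /dV /g; congr (_ * _); ring.
  by rewrite einnerBl orth1 orth2 subrr.
have /dV_eq0_const g_const := einner_self_eq0 (dg_orth g).
by apply/eqP; rewrite -subr_eq0 -/(g S) g_const /g e0 subrr.
Qed.

Lemma setD1_notin (x : T) A : x \notin A -> A :\ x = A.
Proof. by move=> xA; apply/setDidPl; rewrite disjoint_sym disjoints1. Qed.

Variable i : T.

Lemma dV_adj_split h A : dV_adj h A =
  (-1) ^+ (i \notin A) * h (A :\ i) i
  + \sum_(j in A :\ i) h (A :\ j) j - \sum_(j in ~: A :\ i) h A j.
Proof.
rewrite /dV_adj; case: (boolP (i \in A)) => iA /=.
  rewrite (bigD1 i iA) /= expr0 mul1r; congr (_ + _ - _).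
    by apply: eq_bigl => j; rewrite in_setD1 andbC.
  by apply: eq_bigl => j; rewrite in_setD1 in_setC; have [->|] := eqVneq j i; rewrite ?iA.
rewrite [X in _ - X](bigD1 i iA) /= expr1 setD1_notin // mulN1r.
have -> : \sum_(j | (j \notin A) && (j != i)) h A j = \sum_(j in ~: A :\ i) h A j.
  by apply: eq_bigl => j; rewrite in_setD1 in_setC andbC.
by ring.
Qed.

Lemma dV_adj_dI u A :
  dV_adj (dI i u) A = (-1) ^+ (i \notin A) * (u (i |: A) - u (A :\ i)).
Proof.
rewrite dV_adj_split /dI eqxx !big1 => [|j|j]; last 2 first.
- by rewrite in_setD1 => /andP[/negbTE ->].
- by rewrite in_setD1 => /andP[/negbTE ->].
have -> : i |: (A :\ i) = i |: A.
  by apply/setP => j; rewrite !inE; case: eqP.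
by rewrite subr0 addr0.
Qed.

Definition radial (phi : bool -> nat -> R) : vfun T R := fun S => phi (i \in S) #|S :\ i|.

Lemma radialD1 phi A j : j \in A -> j != i ->
  radial phi (A :\ j) = phi (i \in A) #|A :\ i|.-1.
Proof.
move=> jA ji; rewrite /radial in_setD1 eq_sym ji /=; congr phi.
have jAi : j \in A :\ i by rewrite in_setD1 ji.
have -> : A :\ j :\ i = A :\ i :\ j by apply/setP => x; rewrite !inE andbCA.
by rewrite (cardsD1 j (A :\ i)) jAi.
Qed.

Lemma radialU1 phi A j : j \notin A -> j != i ->
  radial phi (j |: A) = phi (i \in A) #|A :\ i|.+1.
Proof.
move=> jA ji; rewrite /radial in_setU1 eq_sym (negbTE ji) /=; congr phi.
have jAi : j \notin A :\ i by rewrite in_setD1 negb_and jA orbT.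
have -> : (j |: A) :\ i = j |: (A :\ i).
  by apply/setP => x; rewrite !inE; have [->|] := eqVneq x j; rewrite ?ji.
by rewrite cardsU1 jAi.
Qed.

Lemma dV_adj_dV_radial phi A :
  let b := i \in A in let k := #|A :\ i| in let m := #|~: A :\ i| in
  dV_adj (dV (radial phi)) A = (-1) ^+ (~~ b) * (phi true k - phi false k)
    + k%:R * (phi b k - phi b k.-1) - m%:R * (phi b k.+1 - phi b k).
Proof.
move=> b k m; rewrite dV_adj_split /dV.
have -> : radial phi (i |: (A :\ i)) = phi true k.
  by rewrite /radial setU11 setU1K ?setD11.
have -> : radial phi (A :\ i) = phi false k.
  by rewrite /radial setD11 setD1_notin ?setD11.
rewrite [X in _ + X - _](eq_bigr (fun=> phi b k - phi b k.-1)) => [|j]; last first.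
  by rewrite in_setD1 => /andP[ji jA]; rewrite setD1K // radialD1.
rewrite [X in _ - X](eq_bigr (fun=> phi b k.+1 - phi b k)) => [|j]; last first.
  by rewrite in_setD1 in_setC => /andP[ji jA]; rewrite radialU1.
by rewrite !sumr_const -/k -/m !mulr_natl.
Qed.

Lemma card_split_at A : #|T| = (#|A :\ i| + #|~: A :\ i|).+1.
Proof.
rewrite -(cardsC A) (cardsD1 i A) (cardsD1 i (~: A)) in_setC.
by case: (i \in A); rewrite /= ?addnS.
Qed.

Lemma pure_bargaining_gap v A : pure_bargaining v ->
  v (i |: A) - v (A :\ i) = (#|~: A :\ i| == 0)%:R * v [set: T].
Proof.
move=> pbv; rewrite [v (A :\ i)]pbv ?subr0; last first.
  by apply/eqP => AiT; move: (setD11 i A); rewrite AiT in_setT.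
have [CA_D1|CA_D1] := eqVneq (~: A :\ i) set0.
  rewrite CA_D1 cards0 mulr1n mul1r; congr v; apply/setP => j; rewrite in_setT in_setU1.
  by apply: contraT => /norP[ji jA]; have := in_set0 j; rewrite -CA_D1 !inE ji jA.
rewrite cards_eq0 (negbTE CA_D1) mul0r pbv //.
apply: contra CA_D1 => /eqP UA_T; apply/eqP/setP => j.
rewrite !inE; have := in_setT j; rewrite -UA_T in_setU1.
by case/orP => [/eqP->|->]; rewrite ?eqxx ?andbF.
Qed.

Definition pb_component v : vfun T R := radial (fun b k =>
  ((#|T| * 2 ^ #|T|)%:R)^-1 * (1 + (-1) ^+ (~~ b) * bargain_coef R #|T| k) * v [set: T]).

Lemma pb_component0 v : pb_component v set0 = 0.
Proof. by rewrite /pb_component /radial in_set0 set0D cards0 bargain_coef0; ring. Qed.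

Lemma pb_component_balance v A : pure_bargaining v ->
  dV_adj (fun S j => dI i v S j - dV (pb_component v) S j) A = 0.
Proof.
move=> pbv; rewrite dV_adjB dV_adj_dI dV_adj_dV_radial pure_bargaining_gap //.
set b := i \in A; set k := #|A :\ i|; set m := #|~: A :\ i|.
set N : R := (#|T| * 2 ^ #|T|)%:R; set K := N^-1; set a := v [set: T].
have KN : K * N = 1 by rewrite mulVf // pnatr_eq0 -lt0n muln_gt0 expn_gt0 (card_split_at A).
have gapE : (m == 0)%:R * a = K * a * ((m == 0)%:R * N).
  by rewrite mulrCA mulrAC KN mul1r.
have := bargain_coef_recurrence R k m; rewrite -card_split_at -/N => rec0.
rewrite gapE -(mulr0 ((-1) ^+ (~~ b) * K * a)) -rec0.
by case: b; rewrite /= ?expr0 ?expr1; ring.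
Qed.

End Hypercube.

Theorem theorem3p11 (T : finType) (R : realFieldType) (v : {set T} -> R) (i : T)
  (vi : {set T} -> R) :
  pure_bargaining v ->
  is_component_game v i vi ->
  forall S : {set T}, i \notin S ->
    let n := #|T| in
    let c := (\sum_(k < #|S|.+1) ('C(n, k))%:R) / ('C(n.-1, #|S|))%:R in
    vi (i |: S) = ((n * 2 ^ n)%N%:R)^-1 * (1 + c) * v [set: T] /\
    vi S = ((n * 2 ^ n)%N%:R)^-1 * (1 - c) * v [set: T].
Proof.
move=> pbv [vi0 [_ vi_orth]] S iS n c.
have f_orth w : einner (fun S j => dI i v S j - dV (pb_component i v) S j) (dV w) = 0.
  by rewrite einner_dV big1 // => A _; rewrite pb_component_balance ?mulr0.
have vi_eq := dV_proj_unique vi_orth f_orth (etrans vi0 (esym (pb_component0 i v))).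
rewrite !vi_eq /pb_component /radial setU11 setU1K // (negbTE iS).
by rewrite setD1_notin // expr0 expr1 mul1r mulN1r.
Qed.
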